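(* Let $\theta$ be the automorphism of $\Lambda$ sending $t$ to $-t$. Then $L_l^\theta\otimes_\Lambda L_r$ (where $L_l^\theta$ is $L_l$ with right $\Lambda$-action twisted by $\theta$) is a $\Psi$-$\Psi$-bimodule isomorphic to $M^\tau$.
   Context: $F$ is a field of characteristic $p>0$. $\Psi$ is the $F$-algebra generated by orthogonal idempotents $e_1,\dots,e_p$ summing to $1$ and $x=\sum_{l=2}^pe_{l-1}xe_l$, $\xi=\sum_{l=2}^pe_{l-1}\xi e_l$, subject to $x\xi=\xi x$, $\xi^2=0$. $L_l$: left $\Psi$-module with basis $\{x.x^l,\xi.x^l\mid0\le l\le p-1\}$, $e_f$ acting as identity on $x.x^{p-f},\xi.x^{p-f}$, $x:x.x^l\mapsto x.x^{l+1}$, $\xi.x^l\mapsto\xi.x^{l+1}$ (zero when the exponent would reach $p$), $\xi:x.x^l\mapsto\xi.x^{l+1}$, $\xi.x^l\mapsto0$. $L_r$: right $\Psi$-module with basis $\{x^l.x,x^l.\xi\mid0\le l\le p-1\}$, $e_l$ acting as identity on $x^{l-1}.x,x^{l-1}.\xi$, $x$ raising the exponent $l$, $\xi:x^l.x\mapsto x^{l+1}.\xi$, $x^l.\xi\mapsto0$. $\Lambda$ is the exterior algebra on $t$, acting on the right of $L_l$ by $x.x^l\mapsto\xi.x^l$, $\xi.x^l\mapsto0$, and on the left of $L_r$ by $x^l.x\mapsto x^l.\xi$, $x^l.\xi\mapsto0$. $M=L_l\otimes_\Lambda L_r$. $\tau$ is the automorphism of $\Psi$ fixing $x$ and sending $\xi$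 to $-\xi$; $M^\tau$ is $M$ with its right $\Psi$-action twisted by $\tau$. *)

(* Concrete matrix model of the modules L_l, L_r, the
   exterior algebra action, and tensor products over Lambda as quotients
   of Kronecker tensor products over F. *)
From mathcomp Require Import all_boot all_order all_algebra.
From mathcomp Require Import mxtens.
Set Implicit Arguments. Unset Strict Implicit. Unset Printing Implicit Defensive.
Import GRing.Theory.
Local Open Scope ring_scope.

Section Model.
Variables (F : fieldType) (p : nat).

(* Basis of L_l (resp. L_r) indexed by 'I_(p + p):
   lshift j  <->  x.x^j   (resp. x^j.x),
   rshift j  <->  xi.x^j  (resp. x^j.xi),   0 <= j <= p-1.
   bdec i = (is_xi, exponent). *)
Definition bdec (i : 'I_(p + p)) : bool * nat :=
  match split i with inl j => (false, val j) | inr j => (true, val j) end.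

(* Row-vector convention: the operator sends basis vector i to the basis
   vector j with f (bdec i) = Some (bdec j), or to 0 if there is none
   (in particular if the exponent would reach p). *)
Definition opmx (f : bool -> nat -> option (bool * nat)) : 'M[F]_(p + p) :=
  \matrix_(i, j) ((f (bdec i).1 (bdec i).2 == Some (bdec j))%:R).

(* Generators of Psi: GE f stands for the idempotent e_(f+1) (f : 'I_p,
   so e_1, ..., e_p), GX for x, GXi for xi. *)
Inductive gen := GE of 'I_p | GX | GXi.
Inductive side := Left | Right.

(* e_f is the identity on x.x^(p-f), xi.x^(p-f) *)
Definition Ll_e (f : nat) := opmx (fun b l => if l == (p - f)%N then Some (b, l) else None).
Definition Ll_x := opmx (fun b l => Some (b, l.+1)).
Definition Ll_xi := opmx (fun b l => if b then None else Some (true, l.+1)).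
Definition Ll_gen (g : gen) : 'M[F]_(p + p) :=
  match g with GE f => Ll_e (val f).+1 | GX => Ll_x | GXi => Ll_xi end.
(* right action of t : x.x^l |-> xi.x^l, xi.x^l |-> 0 *)
Definition Ll_t := opmx (fun b l => if b then None else Some (true, l)).

(* e_f is the identity on x^(f-1).x, x^(f-1).xi *)
Definition Lr_e (f : nat) := opmx (fun b l => if l == f.-1 then Some (b, l) else None).
Definition Lr_x := opmx (fun b l => Some (b, l.+1)).
Definition Lr_xi := opmx (fun b l => if b then None else Some (true, l.+1)).
Definition Lr_gen (g : gen) : 'M[F]_(p + p) :=
  match g with GE f => Lr_e (val f).+1 | GX => Lr_x | GXi => Lr_xi end.
(* left action of t : x^l.x |-> x^l.xi, x^l.xi |-> 0 *)
Definition Lr_t := opmx (fun b l => if b then None else Some (true, l)).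

Definition Lr_gen_tau (g : gen) : 'M[F]_(p + p) :=
  match g with GXi => - Lr_xi | _ => Lr_gen g end.

Definition N := ((p + p) * (p + p))%N.

(* A (Psi-Psi)-bimodule structure on a quotient of F^N: the actions of the
   generators on representatives. *)
Definition tens_act (Lg Rg : gen -> 'M[F]_(p + p)) (s : side) (g : gen) : 'M[F]_N :=
  match s with
  | Left => Lg g *t (1%:M : 'M[F]_(p + p))
  | Right => (1%:M : 'M[F]_(p + p)) *t Rg g
  end.

(* L_l (x)_Lambda L_r = (L_l (x)_F L_r) / span{ m.t (x) n - m (x) t.n },
   the span being the image of the operator t (x) 1 - 1 (x) t. *)
Definition tensLambda_ker (Tl Tr : 'M[F]_(p + p)) : 'M[F]_N :=
  Tl *t (1%:M : 'M[F]_(p + p)) - (1%:M : 'M[F]_(p + p)) *t Tr.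

(* M = L_l (x)_Lambda L_r ; M^tau has right Psi action twisted by tau *)
Definition M_ker := tensLambda_ker Ll_t Lr_t.
Definition Mtau_act := tens_act Ll_gen Lr_gen_tau.

(* L_l^theta (x)_Lambda L_r, theta : t |-> -t twisting the right Lambda
   action on L_l *)
Definition Ltheta_ker := tensLambda_ker (- Ll_t) Lr_t.
Definition Ltheta_act := tens_act Ll_gen Lr_gen.

End Model.

Definition acts_on_quot (F : fieldType) (n : nat) (K : 'M[F]_n)
    (I : Type) (act : I -> 'M[F]_n) :=
  forall i, (K *m act i <= K)%MS.

(* Isomorphism of the quotient bimodules F^n1 / K1 and F^n2 / K2 with
   generator actions act1, act2: a linear map Phi on representatives that
   sends K1 into K2, induces an injective and surjective map on the
   quotients, and intertwines the action of every generator (on both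
   sides) modulo K2. Since Psi is generated by the e_f, x, xi, this is
   exactly a Psi-Psi-bimodule isomorphism. *)
Definition quot_bimod_iso (F : fieldType) (n1 n2 : nat)
    (K1 : 'M[F]_n1) (K2 : 'M[F]_n2) (I : Type)
    (act1 : I -> 'M[F]_n1) (act2 : I -> 'M[F]_n2) :=
  exists Phi : 'M[F]_(n1, n2),
    [/\ (K1 *m Phi <= K2)%MS,
        (forall v : 'rV[F]_n1, (v *m Phi <= K2)%MS -> (v <= K1)%MS),
        (1%:M <= Phi + K2)%MS &
        (forall i, (act1 i *m Phi - Phi *m act2 i <= K2)%MS)].

(** The twist by [theta] can be moved across the tensor product: the sign
    operator [S] on [L_r], which is [+1] on the vectors [x^l.x] and [-1] on
    the vectors [x^l.xi], is an involution that anticommutes with the left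
    action of [t] on [L_r].  Hence [1 (x) S] carries the relations
    [m.(-t) (x) n = m (x) t.n] of [L_l^theta (x)_Lambda L_r] onto the
    relations of [L_l (x)_Lambda L_r].  It commutes with the left [Psi]-action,
    and since [S] commutes with [e_f] and [x] but anticommutes with [xi], it
    intertwines the right action with its twist by [tau]. *)
From mathcomp Require Import all_boot all_order all_algebra.
From mathcomp Require Import mxtens.
Set Implicit Arguments. Unset Strict Implicit. Unset Printing Implicit Defensive.
Import GRing.Theory.
Local Open Scope ring_scope.

Section OperatorMatrices.
Variables (F : fieldType) (p : nat).

Local Notation op := (bool -> nat -> option (bool * nat)).

(* Basis labels with exponent [>= p] stand for the zero vector. *)
Definition truncate (o : option (bool * nat)) : option (bool * nat) :=
  if o is Some (b, l) then (if (l < p)%N then Some (b, l) else None) else None.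

Lemma bdec_lt (j : 'I_(p + p)) : ((bdec j).2 < p)%N.
Proof. by rewrite /bdec; case: (split j) => k /=. Qed.

Lemma bdec_inj : injective (@bdec p).
Proof.
move=> i j; rewrite /bdec -{2}(splitK i) -{2}(splitK j).
by case: (split i) => a; case: (split j) => c //= [] /val_inj E; rewrite E.
Qed.

Lemma bdec_surj b l : (l < p)%N -> exists j : 'I_(p + p), bdec j = (b, l).
Proof.
move=> lp; exists (unsplit (if b then inr (Ordinal lp) else inl (Ordinal lp))).
by rewrite /bdec unsplitK; case: b.
Qed.

Lemma eq_truncate o (j : 'I_(p + p)) :
  (o == Some (bdec j)) = (truncate o == Some (bdec j)).
Proof.
case: o => [[b l]|] //=; case: ifP => // /negbT lp.
by apply/negbTE/eqP => -[E]; move: (bdec_lt j); rewrite -E /= (negbTE lp).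
Qed.

Lemma eq_opmx (f g : op) :
  (forall b l, (l < p)%N -> truncate (f b l) = truncate (g b l)) ->
  opmx F p f = opmx F p g.
Proof.
move=> fg; apply/matrixP => i j.
by rewrite !mxE eq_truncate [in RHS]eq_truncate fg //; apply: bdec_lt.
Qed.

Definition comp_op (f g : op) : op := fun b l =>
  if truncate (f b l) is Some (b', l') then g b' l' else None.

Lemma opmx_comp (f g : op) : opmx F p f *m opmx F p g = opmx F p (comp_op f g).
Proof.
apply/matrixP => i k; rewrite !mxE /comp_op.
case E: (truncate (f (bdec i).1 (bdec i).2)) => [[b' l']|]; last first.
  by rewrite big1 // => j _; rewrite !mxE eq_truncate E mul0r.
have lp : (l' < p)%N.
  by move: E; case: (f _ _) => [[? ?]|] //=; case: ifP => // ? [_ <-].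
have [j0 Ej0] := bdec_surj b' lp.
rewrite (bigD1 j0) //= big1 ?addr0; first by rewrite !mxE eq_truncate E Ej0 eqxx mul1r.
move=> j nj; rewrite !mxE eq_truncate E -Ej0 (inj_eq (@Some_inj _)) (inj_eq bdec_inj).
by rewrite eq_sym (negbTE nj) mul0r.
Qed.

Lemma opmx_none : opmx F p (fun _ _ => None) = 0.
Proof. by apply/matrixP => i j; rewrite !mxE. Qed.

End OperatorMatrices.

Section ConcreteOperators.
Variables (F : fieldType) (p : nat).

Definition xi_proj := opmx F p (fun b l => if b then Some (b, l) else None).
Definition Lr_sign : 'M[F]_(p + p) := 1%:M - xi_proj - xi_proj.

Ltac rewrite_lt := repeat match goal with H : is_true (_ < _)%N |- _ => rewrite H end.
Ltac op_solve := rewrite /xi_proj /Ll_t /Lr_t /Ll_x /Lr_x /Ll_xi /Lr_xi /Ll_e /Lr_e;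
  rewrite ?opmx_comp -?opmx_none; apply: eq_opmx => -[] ? ?;
  rewrite /comp_op /truncate; rewrite_lt; rewrite //=;
  repeat (case: ifP => //=; rewrite_lt; rewrite //=).

Lemma xi_proj_idem : xi_proj *m xi_proj = xi_proj. Proof. op_solve. Qed.

Lemma Ll_gen_t g : Ll_gen F g *m Ll_t F p = Ll_t F p *m Ll_gen F g.
Proof. by case: g => [f||] /=; op_solve. Qed.

Lemma Lr_gen_t g : Lr_gen F g *m Lr_t F p = Lr_t F p *m Lr_gen F g.
Proof. by case: g => [f||] /=; op_solve. Qed.

Lemma Lr_sign_anticomm (A : 'M[F]_(p + p)) :
  A *m xi_proj = A -> xi_proj *m A = 0 -> A *m Lr_sign = - (Lr_sign *m A).
Proof.
move=> AP PA; rewrite /Lr_sign !mulmxBr !mulmxBl AP PA mulmx1 mul1mx.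
by rewrite !subr0 subrr sub0r.
Qed.

Lemma Lr_sign_comm (A : 'M[F]_(p + p)) :
  A *m xi_proj = xi_proj *m A -> A *m Lr_sign = Lr_sign *m A.
Proof. by move=> AP; rewrite /Lr_sign !mulmxBr !mulmxBl AP mulmx1 mul1mx. Qed.

Lemma Lr_signK : Lr_sign *m Lr_sign = 1%:M.
Proof.
have PS : xi_proj *m Lr_sign = - xi_proj.
  by rewrite /Lr_sign !mulmxBr xi_proj_idem mulmx1 subrr sub0r.
by rewrite {1}/Lr_sign !mulmxBl mul1mx PS opprK /Lr_sign !subrK.
Qed.

Lemma Lr_t_sign : Lr_t F p *m Lr_sign = - (Lr_sign *m Lr_t F p).
Proof. by apply: Lr_sign_anticomm; op_solve. Qed.

Lemma Lr_gen_sign g : Lr_gen F g *m Lr_sign = Lr_sign *m Lr_gen_tau F g.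
Proof.
case: g => [f||] /=; try by apply: Lr_sign_comm; op_solve.
by rewrite mulmxN; apply: Lr_sign_anticomm; op_solve.
Qed.

End ConcreteOperators.

Section TensorQuotients.
Variables (F : fieldType) (p : nat).

Local Notation I := (1%:M : 'M[F]_(p + p)).
Local Notation tens_act := (@tens_act F p).

Lemma tensmxNl m n q r (A : 'M[F]_(m, n)) (B : 'M[F]_(q, r)) :
  (- A) *t B = - (A *t B).
Proof. by apply/matrixP => i j; rewrite !mxE mulNr. Qed.

Lemma tensmxNr m n q r (A : 'M[F]_(m, n)) (B : 'M[F]_(q, r)) :
  A *t (- B) = - (A *t B).
Proof. by apply/matrixP => i j; rewrite !mxE mulrN. Qed.

Lemma tensmx11 m n : (1%:M : 'M[F]_m) *t (1%:M : 'M[F]_n) = 1%:M.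
Proof.
apply/matrixP => i j.
case: (mxtens_indexP i) => i1 i2; case: (mxtens_indexP j) => j1 j2.
rewrite tensmxE !mxE (inj_eq (can_inj (@mxtens_indexK _ _))) xpair_eqE.
by rewrite -natrM mulnb.
Qed.

Lemma tens_act_tensLambda_ker (Tl Tr : 'M[F]_(p + p)) Lg Rg :
  (forall g, Lg g *m Tl = Tl *m Lg g) -> (forall g, Rg g *m Tr = Tr *m Rg g) ->
  acts_on_quot (tensLambda_ker Tl Tr) (fun sg : side * gen p => tens_act Lg Rg sg.1 sg.2).
Proof.
move=> LT RT [[] g] /=; set A := (X in _ *m X).
  suff -> : tensLambda_ker Tl Tr *m A = A *m tensLambda_ker Tl Tr by apply: submxMl.
  by rewrite /A /tensLambda_ker mulmxBl mulmxBr !tensmx_mul !mulmx1 !mul1mx LT.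
suff -> : tensLambda_ker Tl Tr *m A = A *m tensLambda_ker Tl Tr by apply: submxMl.
by rewrite /A /tensLambda_ker mulmxBl mulmxBr !tensmx_mul !mulmx1 !mul1mx RT.
Qed.

Section Twist.
Variables (Tr S : 'M[F]_(p + p)).
Hypotheses (SK : S *m S = 1%:M) (TrS : Tr *m S = - (S *m Tr)).

Lemma tensLambda_ker_twist (Tl : 'M[F]_(p + p)) :
  tensLambda_ker (- Tl) Tr *m (I *t S) = - ((I *t S) *m tensLambda_ker Tl Tr).
Proof.
rewrite /tensLambda_ker mulmxBl mulmxBr !tensmx_mul !mulmx1 !mul1mx.
by rewrite tensmxNl TrS tensmxNr opprB opprK addrC.
Qed.

Lemma tensLambda_ker_twist_sub (Tl : 'M[F]_(p + p)) :
  (tensLambda_ker (- Tl) Tr *m (I *t S) <= tensLambda_ker Tl Tr)%MS.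
Proof. by rewrite tensLambda_ker_twist eqmx_opp submxMl. Qed.

Lemma twist_quot_bimod_iso (Tl : 'M[F]_(p + p)) (Lg Rg Rg' : gen p -> 'M[F]_(p + p)) :
  (forall g, Rg g *m S = S *m Rg' g) ->
  quot_bimod_iso (tensLambda_ker (- Tl) Tr) (tensLambda_ker Tl Tr)
    (fun sg : side * gen p => tens_act Lg Rg sg.1 sg.2)
    (fun sg : side * gen p => tens_act Lg Rg' sg.1 sg.2).
Proof.
move=> RS; have PhiK : (I *t S) *m (I *t S) = 1%:M by rewrite tensmx_mul mulmx1 SK tensmx11.
exists (I *t S); split.
- exact: tensLambda_ker_twist_sub.
- move=> v vPhi; rewrite -[v]mulmx1 -PhiK mulmxA.
  apply: submx_trans (submxMr _ vPhi) _.
  by have := tensLambda_ker_twist_sub (- Tl); rewrite opprK.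
- by rewrite -PhiK (submx_trans (submxMl _ _) (addsmxSl _ _)).
- move=> [[] g]; rewrite /tens_act /= !tensmx_mul !mulmx1 ?mul1mx ?RS.
  all: by rewrite subrr sub0mx.
Qed.

End Twist.

End TensorQuotients.

Theorem lemma28 (F : fieldType) (p : nat) (hp : p \in [pchar F]) :
  acts_on_quot (Ltheta_ker F p) (fun sg : side * gen p => @Ltheta_act F p sg.1 sg.2)
  /\ quot_bimod_iso (Ltheta_ker F p) (M_ker F p)
       (fun sg : side * gen p => @Ltheta_act F p sg.1 sg.2)
       (fun sg : side * gen p => @Mtau_act F p sg.1 sg.2).
Proof.
split.
- apply: tens_act_tensLambda_ker => g; last exact: Lr_gen_t.
  by rewrite mulmxN mulNmx Ll_gen_t.
- exact: (twist_quot_bimod_iso (@Lr_signK F p) (@Lr_t_sign F p) (Ll_t F p) (@Ll_gen F p)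
           (@Lr_gen_sign F p)).
Qed.
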